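(* Let $S$ be a solid and let $x\in S^*$ with $x=a+e(x)$ for some $a\in S$ with $e(a)=0$. Suppose $b\in S$ satisfies $e(b)=0$ and $u(x)=1+b+e(u(x))$. Then $|b|\le e(u(x))$.
   Context: A solid is a set $S$ with two binary operations $+$ and $\cdot$ (written $xy$) and a binary relation $\le$ satisfying the following axioms (all variables range over $S$). (A1) $+$ is associative and commutative. (A2) For each $x$ there is $e$ with $x+e=x$ such that $e+f=e$ for every $f$ with $x+f=x$; this $e$ is unique and is denoted $e(x)$ (the magnitude of $x$). An element $x$ with $x=e(x)$ is called a magnitude. (A3) For each $x$ there is $s$ with $x+s=e(x)$ and $e(s)=e(x)$; it is unique and denoted $-x$; write $x-y$ for $x+(-y)$. (A4) $e(x+y)=e(x)$ or $e(x+y)=e(y)$. (M1) $\cdot$ is associative and commutative. (M2) For each $x\neq e(x)$ there is $u$ with $xu=x$ such that $uv=u$ for every $v$ with $xv=x$; it is unique and denoted $u(x)$. (M3) For each $x\ne e(x)$ there is $d$ with $xd=u(x)$ and $u(d)=u(x)$; it is unique and denoted $x^{-1}$; write $y/x$ for $yx^{-1}$. (M4) If $x\neq e(x)$ and $y\ne e(y)$ then $u(xy)=u(x)$ or $u(xy)=u(y)$. (O1) $\le$ is a total order (reflexive, antisymmetric, transitive, total); $x<y$ means $x\le y$ and $x\ne y$. (O2) $x\le y\Rightarrow x+z\le y+z$. (O3) $y+e(x)=e(x)\Rightarrow (y\le e(x)$ and $-y\le e(x))$. (O4) $(e(x)<x$ and $y\le z)\Rightarrow xy\le xz$. (O5)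 $e(y)\le y\le z\Rightarrow e(x)y\le e(x)z$. (AM1) For all $x,y$ there is $z$ with $e(x)y=e(z)$. (AM2) $e(xy)=e(x)y+e(y)x$. (AM3) If $x\ne e(x)$ then $e(u(x))=e(x)/x$. (AM4) (distributivity axiom) $xy+xz=x(y+z)+e(x)y+e(x)z$. (AM5) $-(xy)=(-x)y$. (E1) There is $m$ with $m+x=x$ for all $x$; it is unique, called zero and denoted $0$. (E2) There is $u$ with $ux=x$ for all $x$; it is unique, called one and denoted $1$. (E3) There is $M$ with $e(x)+M=M$ for all $x$. (E4) There is $x$ with $e(x)\ne 0$ and $e(x)\ne M$. (E5) For every $x$ there is $a$ with $x=a+e(x)$ and $e(a)=0$. (E6) If $x,y$ are magnitudes with $x<y$, there is $z$ with $z\ne e(z)$ and $x<z<y$. Further notation: $S^*=\{x\in S: x\ne e(x)\}$ (zeroless elements). $x$ is positive if $e(x)\le x$ and negative if $x<e(x)$; $|x|=x$ if $x$ is positive and $|x|=-x$ if $x$ is negative. $x$ is precise if $e(x)=0$. The relative uncertainty $R(x)$ is $e(u(x))$ if $x\ne e(x)$, and $M$ (from (E3)) if $x=e(x)$. *)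

From Stdlib Require Import Classical ClassicalEpsilon.

(* The functions e (magnitude), opp (-x), u (unity of x) and inv (x^-1), whose
   existence (and uniqueness) is postulated in (A2),(A3),(M2),(M3), are packaged
   as fields together with their defining properties; the uniqueness clauses of
   the axioms are kept as axioms too.  u and inv are total functions but their
   specification only constrains them on zeroless elements x <> e x. *)
Record solid := Solid {
  car :> Type;
  add : car -> car -> car;
  mul : car -> car -> car;
  le : car -> car -> Prop;
  e : car -> car;
  opp : car -> car;
  u : car -> car;
  inv : car -> car;
  zero : car;
  one : car;
  bigM : car;
  addA : forall x y z, add x (add y z) = add (add x y) z;
  addC : forall x y, add x y = add y x;
  e_spec1 : forall x, add x (e x) = x;
  e_spec2 : forall x f, add x f = x -> add (e x) f = e x;
  e_uniq : forall x e', add x e' = x -> (forall f, add x f = x -> add e' f = e') -> e' = e x;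
  opp_spec1 : forall x, add x (opp x) = e x;
  opp_spec2 : forall x, e (opp x) = e x;
  opp_uniq : forall x s, add x s = e x -> e s = e x -> s = opp x;
  A4 : forall x y, e (add x y) = e x \/ e (add x y) = e y;
  mulA : forall x y z, mul x (mul y z) = mul (mul x y) z;
  mulC : forall x y, mul x y = mul y x;
  u_spec1 : forall x, x <> e x -> mul x (u x) = x;
  u_spec2 : forall x v, x <> e x -> mul x v = x -> mul (u x) v = u x;
  u_uniq : forall x u', x <> e x -> mul x u' = x ->
             (forall v, mul x v = x -> mul u' v = u') -> u' = u x;
  inv_spec1 : forall x, x <> e x -> mul x (inv x) = u x;
  inv_spec2 : forall x, x <> e x -> u (inv x) = u x;
  inv_uniq : forall x d, x <> e x -> mul x d = u x -> u d = u x -> d = inv x;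
  M4 : forall x y, x <> e x -> y <> e y -> u (mul x y) = u x \/ u (mul x y) = u y;
  le_refl : forall x, le x x;
  le_antisym : forall x y, le x y -> le y x -> x = y;
  le_trans : forall x y z, le x y -> le y z -> le x z;
  le_total : forall x y, le x y \/ le y x;
  O2 : forall x y z, le x y -> le (add x z) (add y z);
  O3 : forall x y, add y (e x) = e x -> le y (e x) /\ le (opp y) (e x);
  O4 : forall x y z, (le (e x) x /\ e x <> x) -> le y z -> le (mul x y) (mul x z);
  O5 : forall x y z, le (e y) y -> le y z -> le (mul (e x) y) (mul (e x) z);
  AM1 : forall x y, exists z, mul (e x) y = e z;
  AM2 : forall x y, e (mul x y) = add (mul (e x) y) (mul (e y) x);
  AM3 : forall x, x <> e x -> e (u x) = mul (e x) (inv x);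
  AM4 : forall x y z, add (mul x y) (mul x z)
                      = add (add (mul x (add y z)) (mul (e x) y)) (mul (e x) z);
  AM5 : forall x y, opp (mul x y) = mul (opp x) y;
  zero_spec : forall x, add zero x = x;
  one_spec : forall x, mul one x = x;
  bigM_spec : forall x, add (e x) bigM = bigM;
  E4 : exists x, e x <> zero /\ e x <> bigM;
  E5 : forall x, exists a, x = add a (e x) /\ e a = zero;
  E6 : forall x y, x = e x -> y = e y -> le x y -> x <> y ->
         exists z, z <> e z /\ le x z /\ x <> z /\ le z y /\ z <> y
}.

Arguments add {_}. Arguments mul {_}. Arguments le {_}. Arguments e {_}.
Arguments opp {_}. Arguments u {_}. Arguments inv {_}.
Arguments zero {_}. Arguments one {_}. Arguments bigM {_}.

Definition positive {S : solid} (x : S) : Prop := le (e x) x.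

Definition sabs {S : solid} (x : S) : S :=
  if excluded_middle_informative (positive x) then x else opp x.

(* Put u = u(x), E = e(u) and c = 1 + b, so u = c + E with c precise.  Expanding
   u u = u with the distributivity axiom (AM4) gives c c + E = u, hence
   c b = c c - c is absorbed by E, i.e. |c b| <= E.  If b >= 0 then c >= 1 and
   b <= b c.  If b < 0, the nonnegative precise elements -b and c add up to 1, so
   the larger one z satisfies 1 <= z + z and is therefore bounded by
   2 (-b) c <= E; it cannot be c, for then u = c + E = E. *)
From Stdlib Require Import Classical ClassicalEpsilon.

Local Notation "x +. y" := (add x y) (at level 50, left associativity).
Local Notation "x *. y" := (mul x y) (at level 40, left associativity).

Section SolidFacts.

Variable S : solid.
Implicit Types m n p q x y z : S.

Lemma add_zero_r x : x +. zero = x.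
Proof. rewrite addC; apply zero_spec. Qed.

Lemma mul_one_r x : x *. one = x.
Proof. rewrite mulC; apply one_spec. Qed.

Lemma add_shuffle0 x y z : x +. y +. z = x +. z +. y.
Proof. rewrite <- !addA, (addC S y z); reflexivity. Qed.

Lemma e_idem x : e (e x) = e x.
Proof.
  symmetry; apply e_uniq.
  - apply e_spec2, e_spec1.
  - intros f H; exact H.
Qed.

Lemma e_of_add_idem y : y +. y = y -> e y = y.
Proof. intro H; symmetry; apply e_uniq; auto. Qed.

Lemma e_zero : e (@zero S) = zero.
Proof. apply e_of_add_idem, zero_spec. Qed.

Lemma mag_add_self m : e m = m -> m +. m = m.
Proof. intro Hm; pose proof (e_spec1 S m) as H; rewrite Hm in H; exact H. Qed.

Lemma opp_mag m : e m = m -> opp m = m.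
Proof.
  intro Hm; symmetry; apply opp_uniq.
  - rewrite mag_add_self; auto.
  - reflexivity.
Qed.

Lemma opp_involutive x : opp (opp x) = x.
Proof.
  symmetry; apply opp_uniq.
  - rewrite addC, opp_spec1, opp_spec2; reflexivity.
  - rewrite opp_spec2; reflexivity.
Qed.

Lemma mag_mul_l m y : e m = m -> e (m *. y) = m *. y.
Proof.
  intro Hm; destruct (AM1 S m y) as [z Hz]; rewrite Hm in Hz.
  rewrite Hz, e_idem; reflexivity.
Qed.

Lemma mag_mul_opp_r m y : e m = m -> m *. opp y = m *. y.
Proof.
  intro Hm; rewrite (mulC S m (opp y)), <- AM5, (mulC S y m).
  apply opp_mag, mag_mul_l; exact Hm.
Qed.

Lemma zero_le_e x : le zero (e x).
Proof. apply (proj1 (O3 S x zero (zero_spec S _))). Qed.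

Lemma zero_le_mag m : e m = m -> le zero m.
Proof. intro Hm; rewrite <- Hm; apply zero_le_e. Qed.

Lemma add_le_mono_l x y z : le x y -> le (z +. x) (z +. y).
Proof. intro H; rewrite !(addC S z); apply O2; exact H. Qed.

Lemma mag_add_le m n : e m = m -> e n = n -> le m n -> m +. n = n.
Proof.
  intros Hm Hn Hle.
  assert (Hmn : e (m +. n) = m +. n).
  { apply e_of_add_idem.
    rewrite <- addA, (addA S n m n), (addC S n m), <- addA, mag_add_self, addA,
      mag_add_self; auto. }
  destruct (A4 S m n) as [H | H]; rewrite Hmn, ?Hm, ?Hn in H; [| exact H].
  assert (Hnm : le n m).
  { pose proof (O3 S m n) as H3; rewrite Hm in H3; apply H3; rewrite addC; exact H. }
  rewrite H; apply le_antisym; assumption.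
Qed.

Lemma add_mag_absorb m y : e m = m -> le (e y) y -> le y m -> y +. m = m.
Proof.
  intros Hm Hpos Hle; apply le_antisym.
  - pose proof (O2 S y m m Hle) as H; rewrite mag_add_self in H; auto.
  - pose proof (O2 S (e y) y m Hpos) as H.
    rewrite (mag_add_le (e y) m (e_idem y) Hm (le_trans S _ _ _ Hpos Hle)) in H.
    exact H.
Qed.

Lemma absorbed_le m y : e m = m -> y +. m = m -> le y m /\ le (opp y) m.
Proof. intros Hm H; pose proof (O3 S m y) as H3; rewrite Hm in H3; auto. Qed.

Lemma precise_add p q : e p = zero -> e q = zero -> e (p +. q) = zero.
Proof. intros Hp Hq; destruct (A4 S p q) as [H | H]; rewrite H; auto. Qed.

Lemma e_mul_idem y : y *. y = y -> e y *. y = e y.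
Proof.
  intro Hyy; pose proof (AM2 S y y) as H.
  rewrite Hyy, mag_add_self in H; [| apply mag_mul_l, e_idem].
  symmetry; exact H.
Qed.

(* The nonzero idempotent y cannot be negative: otherwise O4, applied to the
   positive element -y, would give -y = (-y) y <= (-y) e(y) = e(y). *)
Lemma idem_positive y : y <> e y -> y *. y = y -> le (e y) y.
Proof.
  intros Hy Hyy.
  destruct (le_total S (e y) y) as [H | H]; [exact H | exfalso].
  assert (Hopp : le (e y) (opp y)).
  { pose proof (O2 S y (e y) (opp y) H) as H2.
    rewrite opp_spec1, <- (opp_spec2 S y), addC, e_spec1, opp_spec2 in H2.
    exact H2. }
  assert (Hne : e y <> opp y).
  { intro Heq; apply Hy.
    rewrite <- (opp_involutive y), <- Heq, opp_mag, e_idem; auto; apply e_idem. }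
  assert (H4 : le (opp y *. y) (opp y *. e y)).
  { apply O4; [rewrite opp_spec2; split; auto | exact H]. }
  rewrite <- AM5, Hyy, (mulC S (opp y) (e y)), mag_mul_opp_r, e_mul_idem in H4;
    auto using e_idem.
  apply Hne, le_antisym; auto.
Qed.

Lemma u_zeroless x : x <> e x -> u x <> e (u x).
Proof.
  intros Hx H; apply Hx.
  pose proof (mag_mul_l (e (u x)) x (e_idem _)) as Hm.
  rewrite <- H, mulC, u_spec1 in Hm by exact Hx.
  symmetry; exact Hm.
Qed.

Lemma one_neq_e_one x : x <> e x -> @one S <> e one.
Proof.
  intros Hx H; apply Hx.
  pose proof (mag_mul_l (e one) x (e_idem _)) as Hm.
  rewrite <- H, one_spec in Hm.
  symmetry; exact Hm.
Qed.

Lemma e_one_mul_precise q : e q = zero -> e one *. q = zero.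
Proof.
  intro Hq; pose proof (AM2 S one q) as H.
  rewrite one_spec, Hq, mul_one_r, add_zero_r in H.
  symmetry; exact H.
Qed.

(* Write 1 = p + e(1) with p precise (E5).  Then e(1) <= p, so 1 <= p + p, and
   O5 gives e(1) = e(1) 1 <= e(1) (p + p), which is 0 by AM2. *)
Lemma e_one x : x <> e x -> e (@one S) = zero.
Proof.
  intro Hx.
  pose proof (one_neq_e_one x Hx) as Hne.
  pose proof (idem_positive one Hne (mul_one_r one)) as Hle.
  destruct (E5 S one) as [p [Hp Hpe]].
  assert (Hp0 : le zero p).
  { destruct (le_total S zero p) as [H | H]; [exact H | exfalso].
    pose proof (O2 S p zero (e one) H) as H2; rewrite <- Hp, zero_spec in H2.
    apply Hne, le_antisym; auto. }
  assert (Hmp : le (e one) p).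
  { destruct (le_total S (e one) p) as [H | H]; [exact H | exfalso].
    apply Hne; rewrite Hp at 1; apply add_mag_absorb; rewrite ?Hpe; auto using e_idem. }
  assert (H2p : le one (p +. p)).
  { rewrite Hp at 1; apply add_le_mono_l; exact Hmp. }
  pose proof (O5 S one one (p +. p) Hle H2p) as H5.
  rewrite mul_one_r, e_one_mul_precise in H5 by (apply precise_add; exact Hpe).
  apply le_antisym; [exact H5 | apply zero_le_e].
Qed.

(* y <= y (z + z) <= y z + y z <= m *)
Lemma le_mag_of_half m y z :
  e m = m -> e y = zero -> le zero y -> le (y *. z) m -> le one (z +. z) -> le y m.
Proof.
  intros Hm Hy Hy0 Hyz Hz.
  destruct (classic (y = zero)) as [-> | Hnz]; [exact (zero_le_mag m Hm) |].
  assert (Hmz : e (zero *. z) = zero *. z) by apply mag_mul_l, e_zero.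
  assert (H1 : le y (y *. (z +. z))).
  { rewrite <- (mul_one_r y) at 1; apply O4; [rewrite Hy; split; auto | exact Hz]. }
  assert (H2 : y *. z +. y *. z = y *. (z +. z) +. zero *. z).
  { rewrite AM4, Hy, <- addA, (mag_add_self (zero *. z) Hmz); reflexivity. }
  assert (H3 : le (y *. (z +. z)) (y *. z +. y *. z)).
  { rewrite H2, <- (add_zero_r (y *. (z +. z))) at 1.
    apply add_le_mono_l, zero_le_mag, Hmz. }
  assert (H4 : le (y *. z +. y *. z) m).
  { eapply le_trans; [apply O2, Hyz |].
    rewrite <- (mag_add_self m Hm) at 2; apply add_le_mono_l, Hyz. }
  eapply le_trans; [exact H1 |]; eapply le_trans; [exact H3 | exact H4].
Qed.

Section IdempotentDecomposition.

Variables y c : S.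
Hypothesis y_idem : y *. y = y.
Hypothesis y_zeroless : y <> e y.
Hypothesis y_decomp : y = c +. e y.
Hypothesis c_precise : e c = zero.

Lemma precise_le_idem : le c y.
Proof.
  pose proof (O2 S zero (e y) c (zero_le_e y)) as H.
  rewrite zero_spec, addC, <- y_decomp in H; exact H.
Qed.

Lemma precise_nonneg : le zero c.
Proof.
  destruct (le_total S zero c) as [H | H]; [exact H | exfalso].
  pose proof (O2 S c zero (e y) H) as H2; rewrite <- y_decomp, zero_spec in H2.
  apply y_zeroless, le_antisym; [exact H2 | apply idem_positive; assumption].
Qed.

Lemma idem_absorb m : e m = m -> le m (e y) -> y +. m = y.
Proof.
  intros Hm Hle.
  rewrite <- (e_spec1 S y) at 1.
  rewrite <- addA, (addC S (e y) m), (mag_add_le m (e y)); auto using e_idem.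
  apply e_spec1.
Qed.

Lemma idem_e_mul_le z : le (e z) z -> le z y -> le (e y *. z) (e y).
Proof.
  intros Hz Hzy; pose proof (O5 S y z y Hz Hzy) as H.
  rewrite e_mul_idem in H; assumption.
Qed.

Lemma zero_mul_le_idem_e z : le (e z) z -> le z y -> le (zero *. z) (e y).
Proof.
  intros Hz Hzy; pose proof (O5 S zero z y Hz Hzy) as H; rewrite e_zero in H.
  eapply le_trans; [exact H |].
  assert (Hy0 : le (y *. zero) (y *. e y)).
  { apply O4; [split; [apply idem_positive | intro Heq; apply y_zeroless, eq_sym] |
               apply zero_le_e]; assumption. }
  rewrite mulC, (mulC S y (e y)), e_mul_idem in Hy0; assumption.
Qed.

Lemma idem_mul_precise : y *. c +. e y = y.
Proof.
  pose proof (AM4 S y c (e y)) as H.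
  rewrite <- y_decomp, y_idem, (mulC S y (e y)), (e_mul_idem y y_idem) in H.
  assert (Hc : le (e c) c) by (rewrite c_precise; exact precise_nonneg).
  assert (He : le (e (e y)) (e y)) by (rewrite e_idem; apply le_refl).
  rewrite H, (idem_absorb (e y *. c)), (idem_absorb (e y *. e y));
    auto using mag_mul_l, e_idem, idem_e_mul_le, precise_le_idem, idem_positive.
Qed.

Lemma precise_square : c *. c +. e y = y.
Proof.
  pose proof (AM4 S c c (e y)) as H.
  rewrite <- y_decomp, c_precise in H.
  assert (Hc : le (e c) c) by (rewrite c_precise; exact precise_nonneg).
  assert (He : le (e (e y)) (e y)) by (rewrite e_idem; apply le_refl).
  assert (HcE : c *. e y +. e y = e y).
  { rewrite mulC; apply mag_add_le;
      auto using mag_mul_l, e_idem, idem_e_mul_le, precise_le_idem. }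
  rewrite <- HcE, addA, H, (mulC S c y), add_shuffle0, (add_shuffle0 (y *. c)),
    idem_mul_precise, (idem_absorb (zero *. c)), (idem_absorb (zero *. e y));
    auto using mag_mul_l, e_zero, zero_mul_le_idem_e, precise_le_idem, idem_positive.
Qed.

(* With c = 1 + b, distributivity gives c c - c = c b + 0 c, and the square
   c c differs from c only by E; so c b is absorbed by E. *)
Lemma precise_mul_pred_absorb b :
  e (@one S) = zero -> c = one +. b -> c *. b +. e y = e y.
Proof.
  intros He1 Hcb.
  assert (Hb : c +. opp one = b).
  { rewrite Hcb, add_shuffle0, opp_spec1, He1; apply zero_spec. }
  assert (Hsq : c *. c +. opp c = c *. b +. zero *. c).
  { pose proof (AM4 S c c (opp one)) as H.
    rewrite Hb, c_precise, (mag_mul_opp_r zero one e_zero), mul_one_r, add_zero_r,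
      (mulC S c (opp one)), <- AM5, one_spec in H.
    exact H. }
  assert (H0c : zero *. c +. e y = e y).
  { apply mag_add_le; auto using mag_mul_l, e_zero, e_idem.
    apply zero_mul_le_idem_e; [rewrite c_precise; exact precise_nonneg |].
    exact precise_le_idem. }
  rewrite <- H0c at 1.
  rewrite addA, <- Hsq, add_shuffle0, precise_square.
  rewrite y_decomp at 1.
  rewrite add_shuffle0, opp_spec1, c_precise; apply zero_spec.
Qed.

Lemma precise_not_le : ~ le c (e y).
Proof.
  intro H; apply y_zeroless.
  rewrite y_decomp at 1.
  apply add_mag_absorb; [apply e_idem | rewrite c_precise; exact precise_nonneg | exact H].
Qed.

End IdempotentDecomposition.

Lemma abs_le_of_absorbed m b :
  e m = m -> e b = zero -> e (@one S) = zero ->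
  le zero (one +. b) -> ~ le (one +. b) m ->
  (one +. b) *. b +. m = m -> le (sabs b) m.
Proof.
  intros Hm Hb He1 Hc0 Hcm Habs.
  set (c := one +. b) in * .
  destruct (absorbed_le m (c *. b) Hm Habs) as [Hcb Hcb'].
  unfold sabs; destruct (excluded_middle_informative (positive b)) as [Hpos | Hneg];
    unfold positive in *; rewrite Hb in * .
  - destruct (classic (b = zero)) as [-> | Hb0]; [exact (zero_le_mag m Hm) |].
    assert (H1c : le one c).
    { pose proof (O2 S zero b one Hpos) as H; rewrite zero_spec, addC in H; exact H. }
    eapply le_trans; [| exact Hcb].
    rewrite <- (mul_one_r b) at 1; rewrite (mulC S c b).
    apply O4; [rewrite Hb; auto | exact H1c].
  - assert (Hble : le b zero).
    { destruct (le_total S zero b) as [H | H]; [contradiction | exact H]. }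
    assert (Hp0 : le zero (opp b)).
    { pose proof (O2 S b zero (opp b) Hble) as H.
      rewrite opp_spec1, Hb, zero_spec in H; exact H. }
    assert (Hpe : e (opp b) = zero) by (rewrite opp_spec2; exact Hb).
    assert (Hpc : le (opp b *. c) m) by (rewrite <- AM5, mulC; exact Hcb').
    assert (Hsum : opp b +. c = one).
    { unfold c; rewrite addC, <- addA, opp_spec1, Hb, add_zero_r; reflexivity. }
    destruct (le_total S (opp b) c) as [H | H].
    + apply (le_mag_of_half m (opp b) c); auto.
      rewrite <- Hsum; apply O2, H.
    + exfalso; apply Hcm.
      apply (le_mag_of_half m c (opp b)); auto.
      * unfold c; apply precise_add; assumption.
      * rewrite mulC; exact Hpc.
      * rewrite <- Hsum, addC; apply O2, H.
Qed.

End SolidFacts.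

Theorem mainTheorem11 (S : solid) (x a b : S) :
  x <> e x ->
  x = add a (e x) -> e a = zero ->
  e b = zero ->
  u x = add (add one b) (e (u x)) ->
  le (sabs b) (e (u x)).
Proof.
  intros Hx _ _ Hb Hu.
  assert (Hidem : u x *. u x = u x) by (apply u_spec2, u_spec1; exact Hx).
  pose proof (u_zeroless S x Hx) as Hzl.
  pose proof (e_one S x Hx) as He1.
  assert (Hc : e (one +. b) = zero) by (apply precise_add; assumption).
  apply abs_le_of_absorbed; auto using e_idem.
  - exact (precise_nonneg S _ _ Hidem Hzl Hu).
  - exact (precise_not_le S _ _ Hidem Hzl Hu Hc).
  - exact (precise_mul_pred_absorb S _ _ Hidem Hzl Hu Hc b He1 eq_refl).
Qed.
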